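(* Let $(X,V)$ and $(\overline{X},\overline{V})$ be global solutions of the discrete Motsch–Tadmor model (as in the context) whose initial data satisfy \[ \max\{\|\Delta^x(0)\|_F,\|\Delta^{\overline{x}}(0)\|_F\}<M,\quad \|\Delta^v(0)\|_F<\kappa\int_{\|\Delta^x(0)\|_F}^M\psi(s)\,ds,\quad \|\Delta^{\overline{v}}(0)\|_F<\kappa\int_{\|\Delta^{\overline{x}}(0)\|_F}^M\psi(s)\,ds. \] For $i,j\in\{1,\dots,N\}$ and $n\ge0$ let \[ \mathcal{I}_1^{ij}=h\kappa\sum_{l=1}^N(\phi_{il}(n)-\overline{\phi}_{il}(n))\Delta^v_{li}(n)-h\kappa\sum_{l=1}^N(\phi_{jl}(n)-\overline{\phi}_{jl}(n))\Delta^v_{lj}(n). \] Then \[ \sum_{i,j=1}^N\|\mathcal{I}_1^{ij}\|^2\le\frac{16h^2\kappa^2L_a^2M^2}{c_1^2}\Big(1+\frac{c_2}{c_1}\Big)^2\|\Delta^v(n)\|_F^2 . \]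
   Context: Discrete MT model: fix $N\ge1$, $d\ge1$, $\kappa>0$, $h>0$, and $a:[0,\infty)\to\mathbb{R}$ with constants $0<c_1\le c_2$, $c_1\le a\le c_2$, $|a(r_1)-a(r_2)|\le L_a|r_1-r_2|$ ($L_a>0$); $0<h<\min\{1,1/\kappa\}$. A solution satisfies $x_i(n+1)=x_i(n)+hv_i(n)$, $v_i(n+1)=v_i(n)+h\kappa\sum_j\phi_{ij}(n)(v_j(n)-v_i(n))$ with $\phi_{ij}(n)=\frac{a(\|x_i(n)-x_j(n)\|)}{\sum_ka(\|x_i(n)-x_k(n)\|)}$; $\overline{\phi}_{ij}(n)$ is defined likewise from $\overline{X}(n)$. Notation: $\Delta^x_{ij}=x_i-x_j$, $\Delta^v_{ij}=v_i-v_j$, similarly $\Delta^{\overline{x}},\Delta^{\overline{v}}$; $\|A\|_F=(\sum_{i,j}\|A_{ij}\|^2)^{1/2}$. Constants: $\|\phi\|_{\mathrm{Lip}}=\frac{L_a}{Nc_1}(1+\frac{c_2}{c_1})$, $M=\frac{1}{4N\|\phi\|_{\mathrm{Lip}}}$, $\psi(s)=1-\|\phi\|_{\mathrm{Lip}}Ns$. *)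

From HB Require Import structures.
From mathcomp Require Import all_boot all_order all_algebra.
From mathcomp Require Import all_classical all_reals all_analysis.
Set Implicit Arguments. Unset Strict Implicit. Unset Printing Implicit Defensive.
Import Order.TTheory GRing.Theory Num.Theory.
Import numFieldNormedType.Exports.
Local Open Scope classical_set_scope.
Local Open Scope ring_scope.

(* Vectors of R^d are functions 'I_d -> R; agents are indexed by 'I_N
   (i.e. {0,..,N-1} in place of {1,..,N}). *)

Definition enorm (R : realType) (d : nat) (v : 'I_d -> R) : R :=
  Num.sqrt (\sum_(k < d) v k ^+ 2).

Definition delta (R : realType) (N d : nat) (y : 'I_N -> 'I_d -> R)
  (i j : 'I_N) : 'I_d -> R := fun k => y i k - y j k.

Definition frob (R : realType) (N d : nat) (y : 'I_N -> 'I_d -> R) : R :=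
  Num.sqrt (\sum_(i < N) \sum_(j < N) enorm (delta y i j) ^+ 2).

Definition phiMT (R : realType) (N d : nat) (a : R -> R)
  (X : nat -> 'I_N -> 'I_d -> R) (n : nat) (i j : 'I_N) : R :=
  a (enorm (delta (X n) i j)) / \sum_(k < N) a (enorm (delta (X n) i k)).

Definition MT_solution (R : realType) (N d : nat) (kappa h : R) (a : R -> R)
  (X V : nat -> 'I_N -> 'I_d -> R) : Prop :=
  forall (n : nat) (i : 'I_N) (k : 'I_d),
    X n.+1 i k = X n i k + h * V n i k /\
    V n.+1 i k = V n i k
                 + h * kappa * \sum_(j < N) phiMT a X n i j * (V n j k - V n i k).

Definition phiLip (R : realType) (N : nat) (c1 c2 La : R) : R :=
  La / (N%:R * c1) * (1 + c2 / c1).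

Definition Mconst (R : realType) (N : nat) (c1 c2 La : R) : R :=
  1 / (4 * N%:R * phiLip N c1 c2 La).

Definition psi (R : realType) (N : nat) (c1 c2 La : R) (s : R) : R :=
  1 - phiLip N c1 c2 La * N%:R * s.

(* Lebesgue integral int_lo^hi psi(s) ds (for lo <= hi) *)
Definition int_psi (R : realType) (N : nat) (c1 c2 La lo hi : R) : R :=
  (\int[lebesgue_measure]_(s in `[lo, hi]) psi N c1 c2 La s)%R.

Definition I1 (R : realType) (N d : nat) (kappa h : R) (a : R -> R)
  (X V Xb : nat -> 'I_N -> 'I_d -> R) (n : nat) (i j : 'I_N) : 'I_d -> R :=
  fun k =>
    h * kappa * \sum_(l < N) (phiMT a X n i l - phiMT a Xb n i l) * delta (V n) l i k
  - h * kappa * \sum_(l < N) (phiMT a X n j l - phiMT a Xb n j l) * delta (V n) l j k.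

(* The heart of the matter is a uniform bound on the position spread.  Along a
   solution, the Lyapunov functional [|Dv(n)|_F + kappa/2 |Dx(n)|_F] does not
   increase as long as [|Dx(n)|_F <= 2M]: the part of the velocity update that is
   not a contraction by [1 - h kappa] has norm at most
   [sqrt N ||phi||_Lip |Dx(n)|_F |Dv(n)|_F <= |Dv(n)|_F / 2].  The initial
   conditions (with [psi <= 1]) make the functional smaller than [kappa M] at
   [n = 0], so [|Dx(n)|_F < 2M] for all [n], for both solutions.  Consequently
   the two families of weights differ by at most [||phi||_Lip 2M = 1/(2N)], and
   Cauchy-Schwarz gives [sum_ij |I_1^ij|^2 <= (2N ||phi||_Lip 2M h kappa)^2 |Dv(n)|_F^2],
   which is the stated bound since [N ||phi||_Lip = L_a/c1 (1 + c2/c1)]. *)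

From HB Require Import structures.
From mathcomp Require Import all_boot all_order all_algebra.
From mathcomp Require Import all_classical all_reals all_analysis.
From mathcomp Require Import ring lra.
Set Implicit Arguments. Unset Strict Implicit. Unset Printing Implicit Defensive.
Import Order.TTheory GRing.Theory Num.Theory.
Import numFieldNormedType.Exports.
Local Open Scope ring_scope.

Lemma ler_card_mul_sum (R : numDomainType) (I : finType) (c : R) (g : I -> R) :
  (forall m, c <= g m) -> #|I|%:R * c <= \sum_m g m.
Proof. by move=> cg; rewrite mulr_natl -sumr_const; apply: ler_sum. Qed.

Section SumsOfSquares.
Variable R : realFieldType.

Lemma sumr_sqr_ge0 (I : finType) (f : I -> R) : 0 <= \sum_i f i ^+ 2.
Proof. by apply: sumr_ge0 => i _; exact: sqr_ge0. Qed.

Lemma ler_sqr_norm (x y : R) : `|x| <= y -> x ^+ 2 <= y ^+ 2.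
Proof.
move=> xy; rewrite -real_normK ?num_real //.
by rewrite ler_pXn2r ?nnegrE // (le_trans _ xy).
Qed.

Lemma ler_sum_term (I : finType) (F : I -> R) i :
  (forall j, 0 <= F j) -> F i <= \sum_j F j.
Proof. by move=> F0; rewrite (bigD1 i) //= lerDl sumr_ge0. Qed.

(* Evaluate the nonnegative quadratic [t |-> \sum_i (f i - t g i)^2] at
   [t = (\sum_i f i g i) / (\sum_i g i^2)]. *)
Lemma cauchy_schwarz (I : finType) (f g : I -> R) :
  (\sum_i f i * g i) ^+ 2 <= (\sum_i f i ^+ 2) * (\sum_i g i ^+ 2).
Proof.
set A := \sum_i f i ^+ 2; set B := \sum_i g i ^+ 2; set C := \sum_i f i * g i.
have quad_ge0 t : 0 <= A - 2 * t * C + t ^+ 2 * B.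
  have -> : A - 2 * t * C + t ^+ 2 * B = \sum_i (f i - t * g i) ^+ 2.
    rewrite /A /B /C mulr_sumr mulrC mulr_sumr -sumrN -!big_split /=.
    by apply: eq_bigr => i _; ring.
  exact: sumr_sqr_ge0.
have B0 : 0 <= B := sumr_sqr_ge0 g.
have [B_eq0 | B_neq0] := eqVneq B 0.
  have g0 i : g i = 0.
    by apply/eqP; rewrite -sqrf_eq0; move/psumr_eq0P: B_eq0 => -> // j _; exact: sqr_ge0.
  have -> : C = 0 by rewrite /C big1 // => i _; rewrite g0 mulr0.
  by rewrite expr0n mulr_ge0 // sumr_sqr_ge0.
have := mulr_ge0 (quad_ge0 (C / B)) B0.
have -> : (A - 2 * (C / B) * C + (C / B) ^+ 2 * B) * B = A * B - C ^+ 2 by field.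
by rewrite subr_ge0.
Qed.

Lemma sumr_sqr_weighted (I K : finType) (c : I -> R) (w : I -> K -> R) :
  \sum_k (\sum_l c l * w l k) ^+ 2 <= (\sum_l c l ^+ 2) * \sum_l \sum_k w l k ^+ 2.
Proof.
rewrite exchange_big mulr_sumr; apply: ler_sum => k _.
exact: cauchy_schwarz.
Qed.

Lemma sumr_sqr_pair_diff (I K : finType) (u : I -> K -> R) :
  \sum_i \sum_j \sum_k (u i k - u j k) ^+ 2 <= 4 * #|I|%:R * \sum_i \sum_k u i k ^+ 2.
Proof.
set S := fun i => \sum_k u i k ^+ 2.
apply: (@le_trans _ _ (\sum_i \sum_j (2 * S i + 2 * S j))).
  apply: ler_sum => i _; apply: ler_sum => j _; rewrite /S !mulr_sumr -big_split /=.
  apply: ler_sum => k _; have := sqr_ge0 (u i k + u j k); lra.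
have -> : \sum_i \sum_j (2 * S i + 2 * S j) = 4 * #|I|%:R * \sum_i S i.
  rewrite (eq_bigr (fun i => #|I|%:R * (2 * S i) + 2 * \sum_j S j)) => [|i _].
    by rewrite big_split /= sumr_const -!mulr_sumr -(mulr_natl (2 * \sum_j S j)); ring.
  by rewrite big_split /= sumr_const -mulr_sumr -(mulr_natl (2 * S i)).
by rewrite /S.
Qed.

End SumsOfSquares.

Section L2Norm.
Variables (R : rcfType) (I : finType).

Definition l2norm (f : I -> R) : R := Num.sqrt (\sum_i f i ^+ 2).

Lemma l2norm_ge0 (f : I -> R) : 0 <= l2norm f.
Proof. exact: sqrtr_ge0. Qed.

Lemma sqr_l2norm (f : I -> R) : l2norm f ^+ 2 = \sum_i f i ^+ 2.
Proof. by rewrite sqr_sqrtr // sumr_sqr_ge0. Qed.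

Lemma l2norm_le_sqr (f : I -> R) x :
  0 <= x -> \sum_i f i ^+ 2 <= x ^+ 2 -> l2norm f <= x.
Proof.
by move=> x0 fx; rewrite -(ler_pXn2r (_ : 0 < 2)%N) ?nnegrE ?l2norm_ge0 // sqr_l2norm.
Qed.

Lemma l2normD (f g : I -> R) : l2norm (fun i => f i + g i) <= l2norm f + l2norm g.
Proof.
apply: l2norm_le_sqr; first by rewrite addr_ge0 ?l2norm_ge0.
have fg_le : \sum_i f i * g i <= l2norm f * l2norm g.
  have [fg_le0 | fg_gt0] := lerP (\sum_i f i * g i) 0.
    by rewrite (le_trans fg_le0) // mulr_ge0 ?l2norm_ge0.
  rewrite -(ler_pXn2r (_ : 0 < 2)%N) ?nnegrE ?mulr_ge0 ?l2norm_ge0 ?(ltW fg_gt0) //.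
  by rewrite exprMn !sqr_l2norm; exact: cauchy_schwarz.
have -> : \sum_i (f i + g i) ^+ 2 =
    \sum_i f i ^+ 2 + \sum_i g i ^+ 2 + 2 * \sum_i f i * g i.
  by rewrite mulr_sumr -!big_split /=; apply: eq_bigr => i _; ring.
rewrite -!sqr_l2norm; lra.
Qed.

Lemma l2normZ c (f : I -> R) : l2norm (fun i => c * f i) = `|c| * l2norm f.
Proof.
rewrite /l2norm -sqrtr_sqr -sqrtrM ?sqr_ge0 // mulr_sumr.
by congr Num.sqrt; apply: eq_bigr => i _; rewrite exprMn.
Qed.

End L2Norm.

(* Write [a/A - b/B = (a - b)/A + b (B - A)/(A B)] and use [A, B >= #|I| c1]. *)
Lemma normalized_weights_dist (R : realFieldType) (I : finType) (c1 c2 e : R)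
    (al be : I -> R) l :
  0 < c1 ->
  (forall m, c1 <= al m /\ al m <= c2) -> (forall m, c1 <= be m /\ be m <= c2) ->
  (forall m, `|al m - be m| <= e) ->
  `|al l / \sum_m al m - be l / \sum_m be m| <= e / (#|I|%:R * c1) * (1 + c2 / c1).
Proof.
move=> c1_gt0 al_bd be_bd al_be.
have n_gt0 : 0 < #|I|%:R :> R by rewrite ltr0n; apply/card_gt0P; exists l.
set n := #|I|%:R in n_gt0 *; set A := \sum_m al m; set B := \sum_m be m.
have nc1_gt0 : 0 < n * c1 by rewrite mulr_gt0.
have A_gt0 : 0 < A.
  by rewrite (lt_le_trans nc1_gt0) // ler_card_mul_sum // => m; case: (al_bd m).
have B_gt0 : 0 < B.
  by rewrite (lt_le_trans nc1_gt0) // ler_card_mul_sum // => m; case: (be_bd m).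
have BA_le : `|B - A| <= n * e.
  rewrite /A /B -sumrB (le_trans (ler_norm_sum _ _ _)) // mulr_natl -sumr_const.
  by apply: ler_sum => m _; rewrite distrC.
have bl_le : `|be l| <= c2.
  by case: (be_bd l) => bl1 bl2; rewrite ger0_norm // (le_trans (ltW c1_gt0)).
set q := (n * c1)^-1.
have q_ge0 : 0 <= q by rewrite invr_ge0 ltW.
have Aq : A^-1 <= q.
  by rewrite lef_pV2 ?posrE // ler_card_mul_sum // => m; case: (al_bd m).
have Bq : B^-1 <= q.
  by rewrite lef_pV2 ?posrE // ler_card_mul_sum // => m; case: (be_bd m).
have -> : al l / A - be l / B = (al l - be l) * A^-1 + be l * (B - A) * (A^-1 * B^-1).
  by field; rewrite !gt_eqF.
have -> : e / (n * c1) * (1 + c2 / c1) = e * q + c2 * (n * e) * (q * q).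
  by rewrite /q; field; rewrite !gt_eqF.
have Ai_ge0 : 0 <= A^-1 by rewrite invr_ge0 ltW.
have Bi_ge0 : 0 <= B^-1 by rewrite invr_ge0 ltW.
rewrite (le_trans (ler_normD _ _)) // !normrM (ger0_norm Ai_ge0) (ger0_norm Bi_ge0).
apply: lerD; first exact: ler_pM.
by apply: ler_pM; rewrite ?mulr_ge0 //; apply: ler_pM.
Qed.

Lemma int_psi_le (R : realType) (N : nat) (c1 c2 La lo hi : R) :
  0 <= lo -> lo <= hi -> 0 <= phiLip N c1 c2 La ->
  int_psi N c1 c2 La lo hi <= hi - lo.
Proof.
move=> lo_ge0 lo_hi L_ge0.
have integrable_cont (f : R -> R) :
    continuous f -> lebesgue_measure.-integrable `[lo, hi] (EFin \o f).
  move=> f_cont; apply: continuous_compact_integrable; first exact: segment_compact.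
  exact: continuous_subspaceT.
apply: (@le_trans _ _ (\int[lebesgue_measure]_(s in `[lo, hi]) (1 : R))%R).
  apply: le_Rintegral => //; apply: integrable_cont || idtac.
  - move=> x; apply: continuousB; first exact: cst_continuous.
    by apply: continuousM; first exact: cst_continuous.
  - by move=> x; exact: cst_continuous.
  - move=> x; rewrite /= in_itv /= => /andP[lo_x _].
    have x_ge0 : 0 <= x := le_trans lo_ge0 lo_x.
    by rewrite /psi lerBlDr lerDl mulr_ge0 // mulr_ge0 ?ler0n.
rewrite Rintegral_cst // mul1r.
have measure_itv : fine (lebesgue_measure (`[lo, hi] : set R)) = hi - lo.
  rewrite lebesgue_measure_itv /= lte_fin.
  by case: ltgtP lo_hi => //= -> _; rewrite subrr.
by rewrite measure_itv.
Qed.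

Section Configurations.
Variables (R : realType) (N d : nat).
Implicit Types (y : 'I_N -> 'I_d -> R) (v : 'I_d -> R).

Lemma enormE v : enorm v = l2norm v.
Proof. by []. Qed.

Lemma enorm_ge0 v : 0 <= enorm v.
Proof. exact: l2norm_ge0. Qed.

Lemma enorm_deltaC y i j : enorm (delta y i j) = enorm (delta y j i).
Proof.
rewrite /enorm /delta; congr Num.sqrt; apply: eq_bigr => k _.
by rewrite -sqrrN opprB.
Qed.

Lemma enorm_delta_triangle y i j m :
  enorm (delta y i m) <= enorm (delta y i j) + enorm (delta y j m).
Proof.
have -> : delta y i m = (fun k => delta y i j k + delta y j m k).
  by apply/funext => k; rewrite /delta; ring.
exact: l2normD.
Qed.

Lemma sum_triple (F : 'I_N * 'I_N * 'I_d -> R) :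
  \sum_p F p = \sum_i \sum_j \sum_k F (i, j, k).
Proof. by rewrite pair_big /= pair_big; apply: eq_bigr => -[[i j] k]. Qed.

Lemma frobE y : frob y = l2norm (fun p : 'I_N * 'I_N * 'I_d => delta y p.1.1 p.1.2 p.2).
Proof.
rewrite /frob /l2norm sum_triple; congr Num.sqrt.
by apply: eq_bigr => i _; apply: eq_bigr => j _; exact: sqr_l2norm.
Qed.

Lemma frob_ge0 y : 0 <= frob y.
Proof. exact: sqrtr_ge0. Qed.

Lemma sqr_frob y : frob y ^+ 2 = \sum_i \sum_j \sum_k delta y i j k ^+ 2.
Proof. by rewrite frobE sqr_l2norm sum_triple. Qed.

Lemma enorm_delta_le_frob y i j : enorm (delta y i j) <= frob y.
Proof.
rewrite -(ler_pXn2r (_ : 0 < 2)%N) ?nnegrE ?enorm_ge0 ?frob_ge0 //.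
rewrite enormE sqr_l2norm sqr_frob.
set row := fun i' => \sum_j' \sum_k delta y i' j' k ^+ 2.
have row_ge0 i' : 0 <= row i' by apply: sumr_ge0 => j' _; exact: sumr_sqr_ge0.
apply: le_trans (ler_sum_term (F := row) i row_ge0).
by apply: (ler_sum_term (F := fun j' => \sum_k delta y i j' k ^+ 2)) => j'; exact: sumr_sqr_ge0.
Qed.

End Configurations.

Lemma sum_enorm_I1_le (R : realType) (N d : nat) (kappa h : R) (a : R -> R)
    (X V Xb : nat -> 'I_N -> 'I_d -> R) n e :
  (forall i l, `|phiMT a X n i l - phiMT a Xb n i l| <= e) ->
  \sum_i \sum_j enorm (I1 kappa h a X V Xb n i j) ^+ 2
    <= (2 * N%:R * e * (h * kappa)) ^+ 2 * frob (V n) ^+ 2.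
Proof.
move=> phi_close.
set A := fun i k => \sum_l (phiMT a X n i l - phiMT a Xb n i l) * delta (V n) l i k.
have I1E i j : enorm (I1 kappa h a X V Xb n i j) ^+ 2
    = (h * kappa) ^+ 2 * \sum_k (A i k - A j k) ^+ 2.
  by rewrite enormE sqr_l2norm mulr_sumr; apply: eq_bigr => k _; rewrite /I1 /A; ring.
have A_le i : \sum_k A i k ^+ 2 <= N%:R * e ^+ 2 * \sum_l \sum_k delta (V n) l i k ^+ 2.
  apply: le_trans (sumr_sqr_weighted _ _) _; apply: ler_wpM2r.
    by apply: sumr_ge0 => l _; exact: sumr_sqr_ge0.
  rewrite -[N in N%:R]card_ord mulr_natl -sumr_const.
  by apply: ler_sum => l _; exact: ler_sqr_norm.
under eq_bigr do under eq_bigr do rewrite I1E.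
under eq_bigr do rewrite -mulr_sumr.
rewrite -mulr_sumr (le_trans (ler_wpM2l (sqr_ge0 _) (sumr_sqr_pair_diff A))) //.
have -> : (2 * N%:R * e * (h * kappa)) ^+ 2 * frob (V n) ^+ 2 = (h * kappa) ^+ 2 *
    (4 * N%:R * \sum_i N%:R * e ^+ 2 * \sum_l \sum_k delta (V n) l i k ^+ 2).
  by rewrite sqr_frob exchange_big /= -mulr_sumr; ring.
rewrite card_ord ler_wpM2l ?sqr_ge0 // ler_wpM2l ?mulr_ge0 ?ler0n //.
exact: ler_sum.
Qed.

Section Weights.
Variables (R : realType) (N d : nat) (c1 c2 La : R) (a : R -> R).
Hypothesis c1_gt0 : 0 < c1.
Hypothesis La_gt0 : 0 < La.
Hypothesis a_bounds : forall r, 0 <= r -> c1 <= a r /\ a r <= c2.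
Hypothesis a_lipschitz :
  forall r1 r2, 0 <= r1 -> 0 <= r2 -> `|a r1 - a r2| <= La * `|r1 - r2|.
Implicit Types (X Y : nat -> 'I_N -> 'I_d -> R).

Lemma sum_phiMT X n i : \sum_l phiMT a X n i l = 1.
Proof.
have N_gt0 : 0 < N%:R :> R by rewrite ltr0n (leq_ltn_trans _ (ltn_ord i)).
have : N%:R * c1 <= \sum_m a (enorm (delta (X n) i m)).
  rewrite -[N in N%:R]card_ord ler_card_mul_sum // => m.
  by case: (a_bounds (enorm_ge0 (delta (X n) i m))).
move=> /(lt_le_trans (mulr_gt0 N_gt0 c1_gt0)) sum_gt0.
by rewrite /phiMT -mulr_suml divff // gt_eqF.
Qed.

Lemma phiMT_dist X Y n n' i j l r :
  (forall m, `|enorm (delta (X n) i m) - enorm (delta (Y n') j m)| <= r) ->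
  `|phiMT a X n i l - phiMT a Y n' j l| <= phiLip N c1 c2 La * r.
Proof.
move=> dist_le.
have -> : phiLip N c1 c2 La * r = La * r / (#|'I_N|%:R * c1) * (1 + c2 / c1).
  by rewrite card_ord /phiLip; ring.
apply: normalized_weights_dist => // [m|m|m]; try exact: a_bounds (enorm_ge0 _).
rewrite (le_trans (a_lipschitz (enorm_ge0 _) (enorm_ge0 _))) //.
by rewrite ler_pM2l.
Qed.

Lemma phiMT_lipschitz X n i j l :
  `|phiMT a X n i l - phiMT a X n j l| <= phiLip N c1 c2 La * enorm (delta (X n) i j).
Proof.
apply: phiMT_dist => m; rewrite ler_distl.
have := enorm_delta_triangle (X n) i j m; have := enorm_delta_triangle (X n) j i m.
rewrite (enorm_deltaC _ j i) => le_ji le_ij.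
by apply/andP; split; lra.
Qed.

End Weights.

Section Dynamics.
Variables (R : realType) (N d : nat) (kappa h c1 c2 La : R) (a : R -> R).
Hypothesis N_gt0 : (0 < N)%N.
Hypothesis kappa_gt0 : 0 < kappa.
Hypothesis h_gt0 : 0 < h.
Hypothesis hkappa_lt1 : h * kappa < 1.
Hypothesis c1_gt0 : 0 < c1.
Hypothesis c1_le_c2 : c1 <= c2.
Hypothesis La_gt0 : 0 < La.
Hypothesis a_bounds : forall r, 0 <= r -> c1 <= a r /\ a r <= c2.
Hypothesis a_lipschitz :
  forall r1 r2, 0 <= r1 -> 0 <= r2 -> `|a r1 - a r2| <= La * `|r1 - r2|.
Implicit Types (X V : nat -> 'I_N -> 'I_d -> R).

Local Notation L := (phiLip N c1 c2 La).
Local Notation M := (Mconst N c1 c2 La).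

Lemma phiLip_gt0 : 0 < L.
Proof.
have c2_gt0 : 0 < c2 := lt_le_trans c1_gt0 c1_le_c2.
by rewrite /phiLip !(mulr_gt0, divr_gt0, addr_gt0, invr_gt0) // ltr0n.
Qed.

Lemma phiLip_Mconst : L * M = (4 * N%:R)^-1.
Proof.
have := phiLip_gt0; rewrite /Mconst => L_gt0.
by field; rewrite pnatr_eq0 -lt0n N_gt0 gt_eqF.
Qed.

Definition velocity_defect X V n (p : 'I_N * 'I_N * 'I_d) : R :=
  \sum_l (phiMT a X n p.1.1 l - phiMT a X n p.1.2 l) * (V n l p.2 - V n p.1.1 p.2).

Lemma frob_X_step X V n :
  MT_solution kappa h a X V -> frob (X n.+1) <= frob (X n) + h * frob (V n).
Proof.
move=> sol; rewrite !frobE.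
have -> : (fun p : 'I_N * 'I_N * 'I_d => delta (X n.+1) p.1.1 p.1.2 p.2) =
    (fun p => delta (X n) p.1.1 p.1.2 p.2 + h * delta (V n) p.1.1 p.1.2 p.2).
  by apply/funext => p; rewrite /delta !(proj1 (sol n _ _)); ring.
by rewrite (le_trans (l2normD _ _)) // l2normZ gtr0_norm.
Qed.

(* As the weights [phi_{jl}] sum to 1, [v_i - v_j] contracts by [1 - h kappa] up to
   [h kappa] times the defect. *)
Lemma frob_V_step X V n :
  MT_solution kappa h a X V ->
  frob (V n.+1) <= (1 - h * kappa) * frob (V n) + h * kappa * l2norm (velocity_defect X V n).
Proof.
move=> sol; rewrite !frobE.
have -> : (fun p : 'I_N * 'I_N * 'I_d => delta (V n.+1) p.1.1 p.1.2 p.2) =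
    (fun p => (1 - h * kappa) * delta (V n) p.1.1 p.1.2 p.2 + h * kappa * velocity_defect X V n p).
  apply/funext => -[[i j] k] /=; rewrite /delta !(proj2 (sol n _ _)) /velocity_defect /=.
  have -> : \sum_l phiMT a X n j l * (V n l k - V n j k) =
      \sum_l phiMT a X n j l * (V n l k - V n i k) + (V n i k - V n j k).
    rewrite -[X in _ = _ + X]mul1r -(sum_phiMT c1_gt0 a_bounds X n j) mulr_suml -big_split /=.
    by apply: eq_bigr => l _; ring.
  have -> : \sum_l (phiMT a X n i l - phiMT a X n j l) * (V n l k - V n i k) =
      \sum_l phiMT a X n i l * (V n l k - V n i k)
      - \sum_l phiMT a X n j l * (V n l k - V n i k).
    by rewrite -sumrB; apply: eq_bigr => l _; ring.
  ring.
have hk_ge0 : 0 <= h * kappa := mulr_ge0 (ltW h_gt0) (ltW kappa_gt0).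
have one_hk_ge0 : 0 <= 1 - h * kappa by rewrite subr_ge0; exact: ltW.
by rewrite (le_trans (l2normD _ _)) // !l2normZ (ger0_norm one_hk_ge0) (ger0_norm hk_ge0).
Qed.

Lemma sum_sqr_defect_le X V n :
  \sum_p velocity_defect X V n p ^+ 2
    <= N%:R * L ^+ 2 * frob (X n) ^+ 2 * frob (V n) ^+ 2.
Proof.
have col_le i : \sum_l \sum_k (V n l k - V n i k) ^+ 2 <= frob (V n) ^+ 2.
  rewrite sqr_frob [leRHS]exchange_big /=.
  apply: (ler_sum_term (F := fun i' => \sum_l \sum_k delta (V n) l i' k ^+ 2)) => i'.
  by apply: sumr_ge0 => l _; exact: sumr_sqr_ge0.
have pair_le i j : \sum_k velocity_defect X V n (i, j, k) ^+ 2
    <= N%:R * L ^+ 2 * (\sum_k delta (X n) i j k ^+ 2) * frob (V n) ^+ 2.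
  rewrite /velocity_defect /=; apply: le_trans (sumr_sqr_weighted _ _) _.
  apply: ler_pM (col_le i); rewrite ?sumr_sqr_ge0 //.
    by apply: sumr_ge0 => l _; exact: sumr_sqr_ge0.
  rewrite -[N in N%:R]card_ord -mulrA mulr_natl -sumr_const.
  apply: ler_sum => l _; rewrite -sqr_l2norm -enormE -exprMn.
  exact/ler_sqr_norm/(phiMT_lipschitz c1_gt0 La_gt0 a_bounds a_lipschitz).
rewrite sum_triple sqr_frob mulr_sumr mulr_suml; apply: ler_sum => i _.
by rewrite mulr_sumr mulr_suml; apply: ler_sum => j _; exact: pair_le.
Qed.

Lemma l2norm_defect_le_half X V n :
  frob (X n) <= 2 * M -> l2norm (velocity_defect X V n) <= frob (V n) / 2.
Proof.
move=> X_le; apply: l2norm_le_sqr; first by rewrite divr_ge0 ?frob_ge0.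
apply: le_trans (sum_sqr_defect_le X V n) _.
have coef_le : N%:R * L ^+ 2 * frob (X n) ^+ 2 <= 4^-1.
  apply: (@le_trans _ _ (N%:R * L ^+ 2 * (2 * M) ^+ 2)).
    apply: ler_wpM2l; first by rewrite mulr_ge0 ?sqr_ge0.
    by apply: ler_sqr_norm; rewrite ger0_norm ?frob_ge0.
  have -> : N%:R * L ^+ 2 * (2 * M) ^+ 2 = (4 * N%:R) * (L * M) ^+ 2 by ring.
  rewrite phiLip_Mconst expr2 mulrA divff ?mul1r; last by rewrite mulf_neq0 // pnatr_eq0 -lt0n.
  by rewrite lef_pV2 ?posrE ?mulr_gt0 ?ltr0n // ler_peMr // ler1n.
have -> : (frob (V n) / 2) ^+ 2 = 4^-1 * frob (V n) ^+ 2 by field.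
by rewrite ler_wpM2r ?sqr_ge0.
Qed.

Definition lyapunov X V n : R := frob (V n) + kappa / 2 * frob (X n).

Lemma lyapunov_step X V n :
  MT_solution kappa h a X V -> frob (X n) <= 2 * M ->
  lyapunov X V n.+1 <= lyapunov X V n.
Proof.
move=> sol X_le.
have hk_ge0 : 0 <= h * kappa := mulr_ge0 (ltW h_gt0) (ltW kappa_gt0).
have k2_ge0 : 0 <= kappa / 2 by rewrite divr_ge0 // ltW.
have V_step := frob_V_step n sol.
have X_step := ler_wpM2l k2_ge0 (frob_X_step n sol).
have defect_le := ler_wpM2l hk_ge0 (l2norm_defect_le_half V X_le).
rewrite /lyapunov; lra.
Qed.

Lemma frob_X_lt_2Mconst X V :
  MT_solution kappa h a X V -> frob (X 0%N) < M ->
  frob (V 0%N) < kappa * int_psi N c1 c2 La (frob (X 0%N)) M ->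
  forall n, frob (X n) < 2 * M.
Proof.
move=> sol X0_lt V0_lt.
have X0_ge0 := frob_ge0 (X 0%N).
have V0_lt_gap : frob (V 0%N) < kappa * (M - frob (X 0%N)).
  rewrite (lt_le_trans V0_lt) // ler_pM2l // int_psi_le //; last exact: ltW phiLip_gt0.
  exact: ltW.
have kX0_ge0 : 0 <= kappa * frob (X 0%N) by rewrite mulr_ge0 // ltW.
have E0_lt : lyapunov X V 0 < kappa * M by rewrite /lyapunov; lra.
have X_lt n : lyapunov X V n <= lyapunov X V 0 -> frob (X n) < 2 * M.
  move=> En; have := frob_ge0 (V n).
  rewrite -(ltr_pM2l (_ : 0 < kappa / 2)) ?divr_gt0 //.
  have -> : kappa / 2 * (2 * M) = kappa * M by field.
  move: En E0_lt; rewrite /lyapunov; lra.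
have lyapunov_le n : lyapunov X V n <= lyapunov X V 0.
  elim: n => [|n IH] //.
  exact: le_trans (lyapunov_step sol (ltW (X_lt n IH))) IH.
by move=> n; exact: X_lt (lyapunov_le n).
Qed.

End Dynamics.

Theorem lemma4p4 (R : realType) (N d : nat) (kappa h c1 c2 La : R) (a : R -> R)
  (X V Xb Vb : nat -> 'I_N -> 'I_d -> R) :
  (1 <= N)%N -> (1 <= d)%N ->
  0 < kappa -> 0 < h -> h < 1 -> h < 1 / kappa ->
  0 < c1 -> c1 <= c2 -> 0 < La ->
  (forall r, 0 <= r -> c1 <= a r /\ a r <= c2) ->
  (forall r1 r2, 0 <= r1 -> 0 <= r2 -> `|a r1 - a r2| <= La * `|r1 - r2|) ->
  MT_solution kappa h a X V ->
  MT_solution kappa h a Xb Vb ->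
  frob (X 0%N) < Mconst N c1 c2 La ->
  frob (Xb 0%N) < Mconst N c1 c2 La ->
  frob (V 0%N) < kappa * int_psi N c1 c2 La (frob (X 0%N)) (Mconst N c1 c2 La) ->
  frob (Vb 0%N) < kappa * int_psi N c1 c2 La (frob (Xb 0%N)) (Mconst N c1 c2 La) ->
  forall n : nat,
    \sum_(i < N) \sum_(j < N) enorm (I1 kappa h a X V Xb n i j) ^+ 2
    <= 16 * h ^+ 2 * kappa ^+ 2 * La ^+ 2 * Mconst N c1 c2 La ^+ 2 / c1 ^+ 2
       * (1 + c2 / c1) ^+ 2 * frob (V n) ^+ 2.
Proof.
move=> N_gt0 _ kappa_gt0 h_gt0 _ h_lt c1_gt0 c1_le_c2 La_gt0 a_bd a_lip
  sol solb X0_lt Xb0_lt V0_lt Vb0_lt n.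
have hkappa_lt1 : h * kappa < 1 by move: h_lt; rewrite ltr_pdivlMr.
have X_lt := frob_X_lt_2Mconst N_gt0 kappa_gt0 h_gt0 hkappa_lt1 c1_gt0 c1_le_c2 La_gt0
  a_bd a_lip sol X0_lt V0_lt n.
have Xb_lt := frob_X_lt_2Mconst N_gt0 kappa_gt0 h_gt0 hkappa_lt1 c1_gt0 c1_le_c2 La_gt0
  a_bd a_lip solb Xb0_lt Vb0_lt n.
set M := Mconst N c1 c2 La in X_lt Xb_lt *.
have phi_close i l :
    `|phiMT a X n i l - phiMT a Xb n i l| <= phiLip N c1 c2 La * (2 * M).
  apply: (phiMT_dist c1_gt0 La_gt0 a_bd a_lip) => m; rewrite ler_distl.
  have := enorm_delta_le_frob (X n) i m; have := enorm_delta_le_frob (Xb n) i m.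
  have := enorm_ge0 (delta (X n) i m); have := enorm_ge0 (delta (Xb n) i m).
  by move=> *; apply/andP; split; lra.
apply: le_trans (sum_enorm_I1_le kappa h V phi_close) _.
have N_neq0 : N%:R != 0 :> R by rewrite pnatr_eq0 -lt0n.
rewrite le_eqVlt /phiLip; apply/orP; left; apply/eqP.
by field; rewrite N_neq0 gt_eqF.
Qed.
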